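(* Let $\alpha>0$ and let $f$ be defined by $x^\alpha+X^\alpha+f(x,X)^\alpha=1$, i.e. $f(x,X)=(1-x^\alpha-X^\alpha)^{1/\alpha}$ (for $\alpha=1$, $f(x,X)=1-x-X$), on a domain where the following maps are defined. Let $$S(x,X;y,Y)=(u,U;v,V)=\Big(\frac{x}{f(v,V)},\;X\frac{f(y,Y)}{f(v,V)};\;Xy,\;XY\Big),$$ let $\phi(x,X)=\big(f(x,X)/x,\;X/x\big)$, whose inverse is $\phi^{-1}(x,X)=\big((1+x^\alpha+X^\alpha)^{-1/\alpha},\;X(1+x^\alpha+X^\alpha)^{-1/\alpha}\big)$, and let $$S^{xY}(x,X;y,Y)=\Big(x,\;\frac{Xy}{(1+y^\alpha+Y^\alpha)^{1/\alpha}};\;\frac{\big((1+x^\alpha)(1+y^\alpha+Y^\alpha)+X^\alpha y^\alpha\big)^{1/\alpha}}{X},\;Y\Big).$$ Then $(\phi\times\phi)\circ S\circ(\phi^{-1}\times\phi^{-1})=S^{xY}$; i.e. $S$ is $(\mathrm{M\ddot ob})^2$ equivalent to the parametric map $S^{xY}$, which leaves the first and fourth components invariant.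
   Context: Two maps $S,\widehat S:\mathcal X^2\times\mathcal X^2\to\mathcal X^2\times\mathcal X^2$ are $(\mathrm{M\ddot ob})^2$ equivalent if there exists a birational map $\psi:\mathcal X^2\to\mathcal X^2$ with $S\circ(\psi\times\psi)=(\psi\times\psi)\circ\widehat S$ (here $\psi=\phi^{-1}$). *)

From Stdlib Require Import Reals.
Open Scope R_scope.

Definition pt := (R * R)%type.

Definition f (a x X : R) : R :=
  Rpower (1 - Rpower x a - Rpower X a) (1 / a).

Definition S (a : R) (p : pt * pt) : pt * pt :=
  let '((x, X), (y, Y)) := p in
  let v := X * y in
  let V := X * Y in
  ((x / f a v V, X * f a y Y / f a v V), (v, V)).

Definition phi (a : R) (p : pt) : pt :=
  let '(x, X) := p in (f a x X / x, X / x).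

Definition phi_inv (a : R) (p : pt) : pt :=
  let '(x, X) := p in
  let r := Rpower (1 + Rpower x a + Rpower X a) (- (1 / a)) in
  (r, X * r).

Definition SxY (a : R) (p : pt * pt) : pt * pt :=
  let '((x, X), (y, Y)) := p in
  ((x, X * y / Rpower (1 + Rpower y a + Rpower Y a) (1 / a)),
   (Rpower ((1 + Rpower x a) * (1 + Rpower y a + Rpower Y a)
            + Rpower X a * Rpower y a) (1 / a) / X, Y)).

Definition pmap (g : pt -> pt) (p : pt * pt) : pt * pt := (g (fst p), g (snd p)).

(** The key observation is that [phi^{-1}(x, X) = (r, X r)] with
    [r^a (1 + x^a + X^a) = 1], and that [f(r, X r) = x r] at such a point, so
    [phi] recovers [(x, X)] from any point [(r, X r)] of this shape.  Both
    output pairs of [S] on [phi^{-1}(x, X), phi^{-1}(y, Y)] turn out to be of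
    this shape again: the second one with base point [(c/X, Y)] and the first
    one with base point [(x, X y / b)], where [b^a = 1 + y^a + Y^a] and
    [c^a = (1 + x^a) b^a + X^a y^a]. The identity behind the second one is
    [(1 + x^a + X^a)(1 + y^a + Y^a) = c^a + X^a + X^a Y^a]. *)

From Stdlib Require Import Reals Lra.
(* Imported after Reals so that [f] is not shadowed by the projection [Rtopology.f]. *)
Open Scope R_scope.

Lemma Rpower_pos (t z : R) : 0 < Rpower t z.
Proof. exact (exp_pos _). Qed.

Lemma Rpower_mul (t s z : R) :
  0 < t -> 0 < s -> Rpower (t * s) z = Rpower t z * Rpower s z.
Proof. intros Ht Hs; symmetry; exact (Rpower_mult_distr t s z Ht Hs). Qed.

Lemma Rpower_inv (t z : R) : 0 < t -> Rpower (/ t) z = / Rpower t z.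
Proof.
  intros Ht; unfold Rpower.
  rewrite ln_Rinv, <- exp_Ropp by exact Ht.
  f_equal; ring.
Qed.

Lemma Rpower_div (t s z : R) :
  0 < t -> 0 < s -> Rpower (t / s) z = Rpower t z / Rpower s z.
Proof.
  intros Ht Hs; unfold Rdiv.
  rewrite Rpower_mul, Rpower_inv; auto using Rinv_0_lt_compat.
Qed.

Lemma Rpower_Rpower_inverse (t b c : R) :
  0 < t -> b * c = 1 -> Rpower (Rpower t b) c = t.
Proof. intros Ht Hbc; rewrite Rpower_mult, Hbc; exact (Rpower_1 t Ht). Qed.

Lemma Rpower_root_opp (t a : R) :
  0 < a -> 0 < t -> Rpower (Rpower t (- (1 / a))) a = / t.
Proof.
  intros Ha Ht.
  rewrite Rpower_Ropp, Rpower_inv by apply Rpower_pos.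
  rewrite Rpower_Rpower_inverse; auto; field; lra.
Qed.

#[local] Hint Resolve Rpower_pos Rmult_lt_0_compat Rinv_0_lt_compat
  Rdiv_lt_0_compat : rpos.

Lemma f_unique (a t s w : R) :
  0 < a -> 0 < w -> Rpower t a + Rpower s a + Rpower w a = 1 -> f a t s = w.
Proof.
  intros Ha Hw Hsum; unfold f.
  replace (1 - Rpower t a - Rpower s a) with (Rpower w a) by lra.
  apply Rpower_Rpower_inverse; auto; field; lra.
Qed.

Section ScaledPoint.

Variables a x X r : R.
Hypotheses (Ha : 0 < a) (Hx : 0 < x) (HX : 0 < X) (Hr : 0 < r).
Hypothesis Hscale : Rpower r a = / (1 + Rpower x a + Rpower X a).

Lemma f_scaled : f a r (X * r) = x * r.
Proof.
  assert (Hxa : 0 < Rpower x a) by apply Rpower_pos.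
  assert (HXa : 0 < Rpower X a) by apply Rpower_pos.
  apply f_unique; auto with rpos.
  rewrite !Rpower_mul, Hscale by assumption.
  field; lra.
Qed.

Lemma phi_scaled : phi a (r, X * r) = (x, X).
Proof.
  unfold phi; rewrite f_scaled.
  f_equal; field; lra.
Qed.

End ScaledPoint.

Section ConjugatedMap.

Variables a x X y Y : R.
Hypotheses (Ha : 0 < a) (Hx : 0 < x) (HX : 0 < X) (Hy : 0 < y) (HY : 0 < Y).

Let A := 1 + Rpower x a + Rpower X a.
Let B := 1 + Rpower y a + Rpower Y a.
Let C := (1 + Rpower x a) * B + Rpower X a * Rpower y a.
Let rA := Rpower A (- (1 / a)).
Let rB := Rpower B (- (1 / a)).
Let c := Rpower C (1 / a).

Let Hxa : 0 < Rpower x a := Rpower_pos x a.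
Let HXa : 0 < Rpower X a := Rpower_pos X a.
Let Hya : 0 < Rpower y a := Rpower_pos y a.
Let HYa : 0 < Rpower Y a := Rpower_pos Y a.
Let HrA0 : 0 < rA := Rpower_pos _ _.
Let HrB0 : 0 < rB := Rpower_pos _ _.
Let Hc0 : 0 < c := Rpower_pos _ _.

Let HA : 0 < A. Proof. unfold A; lra. Qed.
Let HB : 0 < B. Proof. unfold B; lra. Qed.
Let HC : 0 < C. Proof. unfold C; nra. Qed.

Let HrA : Rpower rA a = / A. Proof. exact (Rpower_root_opp A a Ha HA). Qed.
Let HrB : Rpower rB a = / B. Proof. exact (Rpower_root_opp B a Ha HB). Qed.
Let Hc : Rpower c a = C.
Proof. apply Rpower_Rpower_inverse; [exact HC | field; lra]. Qed.

Lemma second_output_scale :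
  Rpower (X * rA * rB) a = / (1 + Rpower (c / X) a + Rpower Y a).
Proof.
  rewrite Rpower_div, !Rpower_mul, HrA, HrB, Hc by auto with rpos.
  unfold C, A, B; field; nra.
Qed.

Lemma first_output_scale :
  Rpower (/ (c * rB)) a = / (1 + Rpower x a + Rpower (X * y * rB) a).
Proof.
  rewrite Rpower_inv, !Rpower_mul, HrB, Hc by auto with rpos.
  unfold C, B; field; nra.
Qed.

Lemma S_phi_inv :
  S a (pmap (phi_inv a) ((x, X), (y, Y)))
  = ((/ (c * rB), X * y * rB * / (c * rB)), (X * rA * rB, Y * (X * rA * rB))).
Proof.
  unfold S, pmap, phi_inv; cbn; fold A B; fold rA rB.
  rewrite (f_scaled a y Y rB) by auto.
  replace (X * rA * (Y * rB)) with (Y * (X * rA * rB)) by ring.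
  rewrite (f_scaled a (c / X) Y (X * rA * rB))
    by auto using second_output_scale with rpos.
  f_equal; f_equal; field; lra.
Qed.

Lemma phi_S_phi_inv :
  pmap (phi a) (S a (pmap (phi_inv a) ((x, X), (y, Y))))
  = ((x, X * y * rB), (c / X, Y)).
Proof.
  rewrite S_phi_inv; unfold pmap; cbn [fst snd].
  rewrite (phi_scaled a x (X * y * rB)), (phi_scaled a (c / X) Y);
    auto using first_output_scale, second_output_scale with rpos.
Qed.

End ConjugatedMap.

Theorem mainTheorem9 (a x X y Y : R) :
  0 < a -> 0 < x -> 0 < X -> 0 < y -> 0 < Y ->
  pmap (phi a) (S a (pmap (phi_inv a) ((x, X), (y, Y)))) = SxY a ((x, X), (y, Y)).
Proof.
  intros Ha Hx HX Hy HY.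
  rewrite phi_S_phi_inv by assumption.
  unfold SxY; rewrite Rpower_Ropp.
  f_equal; f_equal; unfold Rdiv; ring.
Qed.
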